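(* Let $\mathbb{A}\in\mathbb{C}^{n\times n}$, $\mathbf{f}_1\in\mathbb{C}^n$, $\mathbf{f}_{i+1}=\mathbb{A}\mathbf{f}_i$ for $i=1,\dots,m$, and assume $\mathbf{X}_m=(\mathbf{f}_1,\dots,\mathbf{f}_m)$ has full column rank. Let $C_m$ be the companion matrix (ones on the first subdiagonal, last column $\mathbf{X}_m^\dagger\mathbf{f}_{m+1}$, zeros elsewhere), assume its eigenvalues $\lambda_1,\dots,\lambda_m$ are pairwise distinct, and let $\mathbb{V}_m=(\lambda_i^{j-1})_{i,j=1}^m$. Let $\mathbf{X}_m=U_m\Sigma_m\Phi_m^*$ be a thin SVD ($U_m\in\mathbb{C}^{n\times m}$ with orthonormal columns, $\Sigma_m$ positive diagonal, $\Phi_m$ unitary), let $S_m=U_m^*\mathbb{A}U_m$, and let $B_m=(b_1,\dots,b_m)$ with $S_mb_j=\lambda_jb_j$, $\|b_j\|_2=1$; set $Z_m=U_mB_m$. Then for each $j=1,\dots,m$, $$\mathfrak{a}_j:=\|\mathbf{X}_m\mathbb{V}_m^{-1}\mathbf{e}_j\|_2=\big|(Z_m^\dagger\mathbf{X}_m(:,1))_j\big|,$$ where $\mathbf{e}_j$ is the $j$-th canonical basis vector and $\mathbf{X}_m(:,1)=\mathbf{f}_1$.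
   Context: $\mathbf{X}_m^\dagger$, $Z_m^\dagger$ denote Moore–Penrose pseudoinverses. The matrix $Z_m$ is the matrix of DMD (Ritz) vectors produced by Schmid's DMD without truncation; $S_m$ equals $U_m^*(\mathbb{A}\mathbf{X}_m)\Phi_m\Sigma_m^{-1}$. *)

From HB Require Import structures.
From mathcomp Require Import all_boot all_order all_algebra.
Set Implicit Arguments. Unset Strict Implicit. Unset Printing Implicit Defensive.
Import Order.TTheory GRing.Theory Num.Theory.
Local Open Scope ring_scope.

Definition ctrmx (C : numClosedFieldType) (p q : nat) (A : 'M[C]_(p, q)) : 'M[C]_(q, p) :=
  (map_mx Num.conj A)^T.

Definition vnorm2 (C : numClosedFieldType) (k : nat) (v : 'cV[C]_k) : C :=
  sqrtC (\sum_(i < k) `|v i 0| ^+ 2).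

Definition is_MPinv (C : numClosedFieldType) (p q : nat)
    (A : 'M[C]_(p, q)) (P : 'M[C]_(q, p)) : Prop :=
  [/\ A *m P *m A = A, P *m A *m P = P,
      ctrmx (A *m P) = A *m P & ctrmx (P *m A) = P *m A].

Definition companion (C : numClosedFieldType) (m : nat) (c : 'cV[C]_m) : 'M[C]_m :=
  \matrix_(i < m, j < m)
     (if (i : nat) == j.+1 then 1 else if (j : nat) == m.-1 then c i 0 else 0).

Definition vandermonde (C : numClosedFieldType) (m : nat) (lam : 'I_m -> C) : 'M[C]_m :=
  \matrix_(i < m, j < m) lam i ^+ j.

From HB Require Import structures.
From mathcomp Require Import all_boot all_order all_algebra.
From mathcomp Require Import zify.
Import Order.TTheory GRing.Theory Num.Theory.
Local Open Scope ring_scope.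
Set Implicit Arguments. Unset Strict Implicit. Unset Printing Implicit Defensive.

(* Let X = X_m, V = V_m and P := U^* X V^-1.  Since U^* X X^+ = U^*, the Krylov
   relation A X = X C_m holds after multiplying by U^* on the left, and the rows
   of V are left eigenvectors of C_m, so C_m V^-1 = V^-1 diag(lam).  Together with
   X = U U^* X this gives S_m P = P diag(lam): P diagonalises S_m, and as the lam_j
   are distinct, B_m = P D for an invertible diagonal D = diag(d).  Now
   X V^-1 e_j = U P e_j has norm |P e_j| = 1 / |d_j| because |b_j| = 1, while
   Z_m = U P D has the left inverse Z_m^+, whence
   Z_m^+ f_1 = Z_m^+ U P V e_1 = D^-1 V e_1 = (1 / d_j)_j. *)

Section ConjugateTranspose.
Variable C : numClosedFieldType.

Lemma ctrmxM p q r (M : 'M[C]_(p, q)) (N : 'M[C]_(q, r)) :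
  ctrmx (M *m N) = ctrmx N *m ctrmx M.
Proof. by rewrite /ctrmx map_mxM trmx_mul. Qed.

Lemma vnorm2E k (v : 'cV[C]_k) : vnorm2 v = sqrtC ((ctrmx v *m v) 0 0).
Proof.
rewrite /vnorm2 mxE; congr sqrtC; apply: eq_bigr => i _.
by rewrite /ctrmx !mxE normCK mulrC.
Qed.

Lemma vnorm2Z k a (v : 'cV[C]_k) : vnorm2 (a *: v) = `|a| * vnorm2 v.
Proof.
rewrite /vnorm2.
have -> : \sum_(i < k) `|(a *: v) i 0| ^+ 2 = `|a| ^+ 2 * \sum_(i < k) `|v i 0| ^+ 2.
  by rewrite mulr_sumr; apply: eq_bigr => i _; rewrite mxE normrM exprMn.
by rewrite sqrtCM ?sqrCK ?qualifE /= ?exprn_ge0 ?sumr_ge0 // => i _; exact: exprn_ge0.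
Qed.

Lemma vnorm2_isometry p q (U : 'M[C]_(p, q)) (v : 'cV[C]_q) :
  ctrmx U *m U = 1%:M -> vnorm2 (U *m v) = vnorm2 v.
Proof. by move=> hU; rewrite !vnorm2E ctrmxM -mulmxA (mulmxA _ U) hU mul1mx. Qed.

Lemma MPinv_left_invertible p q (M : 'M[C]_(p, q)) (P L : 'M[C]_(q, p)) :
  is_MPinv M P -> L *m M = 1%:M -> P *m M = 1%:M.
Proof.
case=> hMPM _ _ _ hLM.
by rewrite -[P *m M]mul1mx -hLM -mulmxA (mulmxA M) hMPM.
Qed.

Lemma MPinv_ctrmx_range p q r (M : 'M[C]_(p, q)) (P : 'M[C]_(q, p)) (K : 'M[C]_(q, r)) :
  is_MPinv M P -> ctrmx (M *m K) *m M *m P = ctrmx (M *m K).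
Proof.
case=> hMPM _ hMP _.
by rewrite ctrmxM -!mulmxA -hMP -ctrmxM hMPM.
Qed.

End ConjugateTranspose.

Lemma vandermonde_unit (C : numClosedFieldType) m (lam : 'I_m -> C) :
  injective lam -> vandermonde lam \in unitmx.
Proof.
move=> lam_inj.
have -> : vandermonde lam = (Vandermonde m (\row_i lam i))^T.
  by apply/matrixP => i j; rewrite !mxE.
rewrite unitmxE det_tr det_Vandermonde unitfE prodf_seq_neq0.
apply/allP => i _ /=; rewrite prodf_seq_neq0; apply/allP => k _ /=.
apply/implyP => ik; rewrite !mxE subr_eq0; apply/eqP => /lam_inj ki.
by rewrite ki ltnn in ik.
Qed.

Section Companion.
Variables (C : numClosedFieldType) (m : nat).
Implicit Types (c : 'cV[C]_m.+1) (a : C).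

Lemma mul_mx_companion p c (M : 'M[C]_(p, m.+1)) :
  M *m companion c =
  \matrix_(i, k) if (k : nat) == m then (M *m c) i 0 else M i (inord k.+1).
Proof.
apply/matrixP => i k; rewrite !mxE.
case: eqP => [km | /eqP km].
  apply: eq_bigr => l _; rewrite !mxE km /= eqxx.
  by rewrite ifN // neq_ltn ltn_ord.
have k1m : (k.+1 < m.+1)%N by have := ltn_ord k; lia.
rewrite (bigD1 (inord k.+1)) //= big1 ?addr0 => [|l /eqP lk].
  by rewrite !mxE inordK // eqxx mulr1.
rewrite !mxE ifN ?ifN ?mulr0 //; apply/eqP => lk1; apply: lk.
by apply/val_inj; rewrite /= inordK.
Qed.

(* The subdiagonal of ones forces v_(k+1) = a v_k on a left eigenvector v. *)
Lemma companion_left_eigenvector c a :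
  eigenvalue (companion c) a ->
  (\row_(k < m.+1) a ^+ k) *m companion c = a *: \row_(k < m.+1) a ^+ k.
Proof.
case/eigenvalueP => v hv v_neq0.
have vE : forall k, (k <= m)%N -> v 0 (inord k) = a ^+ k * v 0 0.
  elim=> [|k IHk] km.
    by rewrite expr0 mul1r; congr (v 0 _); apply/val_inj; rewrite /= inordK.
  have := congr1 (fun w : 'rV_m.+1 => w 0 (inord k)) hv.
  rewrite mul_mx_companion !mxE inordK; last by lia.
  by rewrite ifN; [move=> ->; rewrite IHk ?exprS ?mulrA //; lia | apply/eqP; lia].
set r := \row_(k < m.+1) a ^+ k.
have v_r : v = v 0 0 *: r.
  apply/matrixP => i k; rewrite !mxE (ord1 i) mulrC -vE; last by have := ltn_ord k; lia.
  by congr (v 0 _); apply/val_inj; rewrite /= inordK.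
have v00 : v 0 0 != 0 by apply: contra v_neq0 => /eqP v0; rewrite v_r v0 scale0r.
apply: (@scalerI _ _ (v 0 0)) => //.
by rewrite scalemxAl -v_r hv {1}v_r !scalerA mulrC.
Qed.

Lemma companion_mul_invmx_vandermonde c (lam : 'I_m.+1 -> C) :
  injective lam -> (forall i, eigenvalue (companion c) (lam i)) ->
  companion c *m invmx (vandermonde lam) =
  invmx (vandermonde lam) *m diag_mx (\row_i lam i).
Proof.
move=> lam_inj lam_eig; have uV := vandermonde_unit lam_inj.
set V := vandermonde lam.
have VC : V *m companion c = diag_mx (\row_i lam i) *m V.
  apply/matrixP => i k; rewrite mul_diag_mx !mxE.
  have := congr1 (fun w : 'rV_m.+1 => w 0 k) (companion_left_eigenvector (lam_eig i)).
  by rewrite !mxE => <-; apply: eq_bigr => l _; rewrite !mxE.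
by rewrite -[companion c]mul1mx -(mulVmx uV) -(mulmxA (invmx V) V) VC !mulmxA mulmxK.
Qed.

End Companion.

Definition krylov_mx (C : numClosedFieldType) n m (f : nat -> 'cV[C]_n) : 'M[C]_(n, m) :=
  \matrix_(i < n, j < m) f j i 0.

Lemma col_krylov_mx (C : numClosedFieldType) n m (f : nat -> 'cV[C]_n) (k : 'I_m) :
  col k (krylov_mx m f) = f k.
Proof. by apply/matrixP => i z; rewrite (ord1 z) !mxE. Qed.

Lemma mul_krylov_mxE (C : numClosedFieldType) n m p (f : nat -> 'cV[C]_n)
    (M : 'M[C]_(p, n)) i (k : 'I_m) :
  (M *m krylov_mx m f) i k = (M *m f k) i 0.
Proof. by rewrite !mxE; apply: eq_bigr => l _; rewrite mxE. Qed.

Lemma krylov_companion (C : numClosedFieldType) n m p (A : 'M[C]_n)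
    (f : nat -> 'cV[C]_n) (Xp : 'M[C]_(m.+1, n)) (M : 'M[C]_(p, n)) :
  (forall i, (i < m.+1)%N -> f i.+1 = A *m f i) ->
  M *m krylov_mx m.+1 f *m Xp = M ->
  M *m A *m krylov_mx m.+1 f = M *m krylov_mx m.+1 f *m companion (Xp *m f m.+1).
Proof.
move=> hf hMXp; apply/matrixP => i k.
rewrite mul_mx_companion mxE !mul_krylov_mxE.
case: eqP => [-> | /eqP km]; first by rewrite mulmxA hMXp hf // mulmxA.
rewrite inordK ?hf ?mulmxA //; have := ltn_ord k; lia.
Qed.

Section Eigenvectors.
Variables (F : fieldType) (m : nat) (lam : 'I_m -> F).
Hypothesis lam_inj : injective lam.

Lemma diag_eigenvector (u : 'cV[F]_m) k :
  diag_mx (\row_i lam i) *m u = lam k *: u -> u = u k 0 *: delta_mx k 0.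
Proof.
move=> hu; apply/matrixP => i z; rewrite (ord1 z) !mxE.
have := congr1 (fun v : 'cV_m => v i 0) hu; rewrite mul_diag_mx !mxE => ui.
have [-> | ik] := eqVneq i k; first by rewrite eqxx mulr1.
rewrite mulr0; apply/eqP; move/eqP: ui; rewrite -subr_eq0 -mulrBl mulf_eq0 subr_eq0.
by case/orP => [/eqP/lam_inj ik' | //]; rewrite ik' eqxx in ik.
Qed.

Lemma eigenvectors_scaled_diagonalizer (S P B : 'M[F]_m) :
  P \in unitmx -> S *m P = P *m diag_mx (\row_i lam i) ->
  (forall k, S *m col k B = lam k *: col k B) ->
  B = P *m diag_mx (\row_k (invmx P *m col k B) k 0).
Proof.
move=> uP SP hB; apply/matrixP => i k; rewrite mul_mx_diag !mxE mulrC.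
set u := invmx P *m col k B.
have hu : diag_mx (\row_i lam i) *m u = lam k *: u.
  rewrite -[diag_mx _ *m u](mulKmx uP) (mulmxA P) -SP -(mulmxA S) /u mulKVmx //.
  by rewrite hB scalemxAr.
have := congr1 (fun v : 'cV_m => v i 0) (mulKVmx uP (col k B)).
by rewrite -/u {1}(diag_eigenvector hu) -scalemxAr -colE !mxE => <-.
Qed.

End Eigenvectors.

Lemma col_mul_diag_mx (R : comPzRingType) p m (P : 'M[R]_(p, m)) (d : 'rV[R]_m) k :
  col k (P *m diag_mx d) = d 0 k *: col k P.
Proof. by apply/matrixP => i z; rewrite mul_mx_diag !mxE mulrC. Qed.

Lemma diag_mx_mulV (F : fieldType) m (d : 'rV[F]_m) :
  (forall k, d 0 k != 0) -> diag_mx d *m diag_mx (\row_k (d 0 k)^-1) = 1%:M.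
Proof.
move=> d_neq0; apply/matrixP => i k; rewrite mul_diag_mx !mxE.
by have [-> | ik] := eqVneq i k; rewrite ?mulr1n ?divff ?mulr0n ?mulr0.
Qed.

Lemma MPinv_isometry_mul_diag (C : numClosedFieldType) n m (U : 'M[C]_(n, m))
    (P : 'M[C]_m) (d : 'rV[C]_m) (Zp : 'M[C]_(m, n)) :
  ctrmx U *m U = 1%:M -> P \in unitmx -> (forall k, d 0 k != 0) ->
  is_MPinv (U *m (P *m diag_mx d)) Zp ->
  Zp *m U *m P = diag_mx (\row_k (d 0 k)^-1).
Proof.
move=> hU uP d_neq0 hZp.
have uB : P *m diag_mx d \in unitmx.
  rewrite unitmx_mul uP unitmxE det_diag unitfE prodf_seq_neq0.
  by apply/allP => k _ /=; exact: d_neq0.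
have ZUB : Zp *m (U *m (P *m diag_mx d)) = 1%:M.
  apply: (MPinv_left_invertible (L := invmx (P *m diag_mx d) *m ctrmx U)) => //.
  by rewrite mulmxA -(mulmxA _ _ U) hU mulmx1 mulVmx.
rewrite -[LHS]mulmx1 -(diag_mx_mulV d_neq0) mulmxA.
by rewrite -(mulmxA (Zp *m U) P) -(mulmxA Zp U) ZUB mul1mx.
Qed.

Section ThinSVD.
Variables (C : numClosedFieldType) (n m : nat).
Variables (X U : 'M[C]_(n, m)) (sigma : 'rV[C]_m) (Phi : 'M[C]_m).
Hypotheses (hU : ctrmx U *m U = 1%:M) (hPhi : ctrmx Phi *m Phi = 1%:M).
Hypotheses (hsigma : forall j, 0 < sigma 0 j) (hsvd : X = U *m diag_mx sigma *m ctrmx Phi).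

Lemma svd_ctrmx_mul : ctrmx U *m X = diag_mx sigma *m ctrmx Phi.
Proof. by rewrite hsvd !mulmxA hU mul1mx. Qed.

Lemma svd_proj : U *m (ctrmx U *m X) = X.
Proof. by rewrite svd_ctrmx_mul mulmxA -hsvd. Qed.

Lemma svd_unit : ctrmx U *m X \in unitmx.
Proof.
rewrite svd_ctrmx_mul unitmx_mul; apply/andP; split; last by case: (mulmx1_unit hPhi).
rewrite unitmxE det_diag unitfE prodf_seq_neq0; apply/allP => i _ /=.
exact: lt0r_neq0.
Qed.

Lemma svd_range : U = X *m (Phi *m diag_mx (\row_k (sigma 0 k)^-1)).
Proof.
have sigma_neq0 k : sigma 0 k != 0 by exact: lt0r_neq0.
by rewrite hsvd -!mulmxA (mulmxA _ Phi) hPhi mul1mx diag_mx_mulV // mulmx1.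
Qed.

End ThinSVD.

Unset Implicit Arguments.

Theorem proposition2p3 (C : numClosedFieldType) (n m : nat)
  (A : 'M[C]_n) (f : nat -> 'cV[C]_n)
  (hf : forall i : nat, (i < m)%N -> f i.+1 = A *m f i)
  (Xp : 'M[C]_(m, n))
  (hXp : is_MPinv (\matrix_(i < n, j < m) f j i 0) Xp)
  (hrank : \rank (\matrix_(i < n, j < m) f j i 0) = m)
  (lam : 'I_m -> C) (hlam_inj : injective lam)
  (hlam_eig : forall i, eigenvalue (companion (Xp *m f m)) (lam i))
  (U : 'M[C]_(n, m)) (sigma : 'rV[C]_m) (Phi : 'M[C]_m)
  (hU : ctrmx U *m U = 1%:M)
  (hsigma : forall j, 0 < sigma 0 j)
  (hPhi : ctrmx Phi *m Phi = 1%:M)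
  (hsvd : \matrix_(i < n, j < m) f j i 0 = U *m diag_mx sigma *m ctrmx Phi)
  (B : 'M[C]_m)
  (hB_eig : forall j, (ctrmx U *m A *m U) *m col j B = lam j *: col j B)
  (hB_norm : forall j, vnorm2 (col j B) = 1)
  (Zp : 'M[C]_(m, n))
  (hZp : is_MPinv (U *m B) Zp) :
  forall j : 'I_m,
    vnorm2 ((\matrix_(i < n, k < m) f k i 0) *m invmx (vandermonde lam) *m delta_mx j 0)
    = `| (Zp *m f 0%N) j 0 |.
Proof.
destruct m as [|m]; [by case | move=> j].
rewrite -/(krylov_mx m.+1 f) in hXp hsvd *.
set X := krylov_mx m.+1 f in hXp hsvd *.
set W := invmx (vandermonde lam); set P := ctrmx U *m X *m W.
have XW : X *m W = U *m P by rewrite /P mulmxA (svd_proj hU hsvd).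
have hUXp : ctrmx U *m X *m Xp = ctrmx U.
  by rewrite (svd_range hPhi hsigma hsvd) MPinv_ctrmx_range.
have SP : ctrmx U *m A *m U *m P = P *m diag_mx (\row_i lam i).
  rewrite -mulmxA -XW mulmxA (krylov_companion hf hUXp) -!mulmxA.
  by rewrite companion_mul_invmx_vandermonde // !mulmxA.
have uP : P \in unitmx.
  by rewrite !unitmx_mul (svd_unit hU hPhi hsigma hsvd) unitmx_inv vandermonde_unit.
have BE := eigenvectors_scaled_diagonalizer hlam_inj uP SP hB_eig.
set d := \row_k _ in BE; clearbody d; subst B.
have d_norm k : `|d 0 k| * vnorm2 (col k P) = 1.
  by rewrite -vnorm2Z -col_mul_diag_mx.
have d_neq0 k : d 0 k != 0.
  by apply/eqP => dk0; move: (d_norm k); rewrite dk0 normr0 mul0r => /eqP; rewrite eq_sym oner_eq0.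
have ZUP := MPinv_isometry_mul_diag hU uP d_neq0 hZp.
have f0 : f 0%N = U *m P *m vandermonde lam *m delta_mx 0 0.
  by rewrite -XW mulmxKV ?vandermonde_unit // -colE col_krylov_mx.
rewrite XW -mulmxA -colE vnorm2_isometry // f0 !(mulmxA Zp) ZUP -colE mxE.
have dj_norm_neq0 : `|d 0 j| != 0 by rewrite normr_eq0.
rewrite mul_diag_mx !mxE expr0 mulr1 normfV.
by rewrite -[LHS](mulKf dj_norm_neq0) d_norm mulr1.
Qed.
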